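(* Let $\mathbb{F}\in\{\mathbb{R},\mathbb{C}\}$, $A\in\mathbb{F}^{m\times n}$, $b\in\mathbb{F}^m$ and $f:\mathbb{F}^n\to[0,\infty]$. A point $x'$ is a stationary point of $\mathcal{K}_{reg}(x)=\mathcal{Q}_2(f)(x)+\|Ax-b\|_2^2$ if and only if $$x'\in\operatorname*{argmin}_x\ \mathcal{Q}_2(f)(x)+\|x-z'\|_2^2,\qquad\text{where } z'=(I-A^*A)x'+A^*b.$$
   Context: $\mathcal{Q}_2(f)$ is the quadratic envelope of $f$: $\mathcal{Q}_2(f)(x)=\breve h(x)-\|x\|^2$, where $\breve h$ is the lower semicontinuous convex envelope of $h(x)=f(x)+\|x\|^2$. $A^*$ is the conjugate transpose, $\langle x,y\rangle=\sum_i x_i\overline{y_i}$, norms Euclidean. A stationary point of a function $g$ is a point $x$ with $0$ in the Fréchet subdifferential $\hat\partial g(x)$, i.e. the set of $v$ with $\liminf_{y\to x,y\ne x}(g(y)-g(x)-\mathrm{Re}\langle v,y-x\rangle)/\|y-x\|\ge0$. *)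

From HB Require Import structures.
From mathcomp Require Import all_boot all_order all_algebra.
From mathcomp Require Import all_classical all_reals ereal.
From mathcomp Require Import complex.
Set Implicit Arguments. Unset Strict Implicit. Unset Printing Implicit Defensive.
Import Order.TTheory GRing.Theory Num.Theory.
Local Open Scope ring_scope.
Local Open Scope classical_set_scope.

(* Scalar field F in {R, C}, presented over the real field R:
   emb : R -> F (inclusion of the reals), re : real part, cj : conjugation. *)
Record scalars (R : realType) := Scalars {
  sc_ty :> comNzRingType;
  sc_emb : R -> sc_ty;
  sc_re : sc_ty -> R;
  sc_cj : sc_ty -> sc_ty }.

Definition realS (R : realType) : scalars R :=
  @Scalars R R (fun t => t) (fun t => t) (fun t => t).

Definition complexS (R : realType) : scalars R :=
  @Scalars R R[i] (fun t => Complex t 0) (@complex.Re R) (@conjc R).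

Section Generic.
Variables (R : realType) (S : scalars R).
Local Notation F := (sc_ty S).
Local Notation emb := (@sc_emb R S).
Local Notation re := (@sc_re R S).
Local Notation cj := (@sc_cj R S).

Definition inner n (x y : 'cV[F]_n) : F := \sum_i x i 0 * cj (y i 0).
Definition nrm2 n (x : 'cV[F]_n) : R := re (inner x x).
Definition nrm n (x : 'cV[F]_n) : R := Num.sqrt (nrm2 x).

Definition adjmx m n (A : 'M[F]_(m, n)) : 'M[F]_(n, m) := map_mx cj A^T.

Definition lsc n (g : 'cV[F]_n -> \bar R) : Prop :=
  forall x (a : R), (a%:E < g x)%E ->
    exists2 d : R, 0 < d & forall y, nrm (y - x) < d -> (a%:E < g y)%E.

(* convexity (convex epigraph) of an extended-real function *)
Definition convexf n (g : 'cV[F]_n -> \bar R) : Prop :=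
  forall x y (t : R), 0 <= t <= 1 -> forall a b : R,
    (g x <= a%:E)%E -> (g y <= b%:E)%E ->
    (g (emb t *: x + emb (1 - t) *: y)%R <= (t * a + (1 - t) * b)%:E)%E.

Definition lsc_cvx_env n (h : 'cV[F]_n -> \bar R) (x : 'cV[F]_n) : \bar R :=
  ereal_sup [set g x | g in
     [set g : 'cV[F]_n -> \bar R | lsc g /\ convexf g /\ forall y, (g y <= h y)%E]].

Definition Q2 n (f : 'cV[F]_n -> \bar R) (x : 'cV[F]_n) : \bar R :=
  (lsc_cvx_env (fun y => f y + (nrm2 y)%:E) x - (nrm2 x)%:E)%E.

(* Frechet subdifferential (at points where g is finite):
   liminf_{y -> x, y <> x} (g y - g x - Re<v, y - x>) / ||y - x|| >= 0 *)
Definition frechet_subdiff n (g : 'cV[F]_n -> \bar R) (x v : 'cV[F]_n) : Prop :=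
  g x \is a fin_num /\
  forall eps : R, 0 < eps -> exists2 d : R, 0 < d & forall y, 0 < nrm (y - x) < d ->
    ((- (eps * nrm (y - x)))%:E <= g y - g x - (re (inner v (y - x)))%:E)%E.

Definition stationary n (g : 'cV[F]_n -> \bar R) (x : 'cV[F]_n) : Prop :=
  frechet_subdiff g x 0.

(* x is in argmin g (Rockafellar-Wets convention: empty if g == +oo) *)
Definition is_argmin n (g : 'cV[F]_n -> \bar R) (x : 'cV[F]_n) : Prop :=
  g x != +oo%E /\ forall y, (g x <= g y)%E.

Definition Kreg m n (A : 'M[F]_(m, n)) (b : 'cV[F]_m) (f : 'cV[F]_n -> \bar R)
  (x : 'cV[F]_n) : \bar R := (Q2 f x + (nrm2 (A *m x - b))%:E)%E.

Definition zprime m n (A : 'M[F]_(m, n)) (b : 'cV[F]_m) (x : 'cV[F]_n) : 'cV[F]_n :=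
  (1%:M - adjmx A *m A) *m x + adjmx A *m b.

Definition prop3p2_claim m n (A : 'M[F]_(m, n)) (b : 'cV[F]_m)
  (f : 'cV[F]_n -> \bar R) (x' : 'cV[F]_n) : Prop :=
  stationary (Kreg A b f) x' <->
  is_argmin (fun x => (Q2 f x + (nrm2 (x - zprime A b x'))%:E)%E) x'.
End Generic.

From HB Require Import structures.
From mathcomp Require Import all_boot all_order all_algebra.
From mathcomp Require Import all_classical all_reals ereal.
From mathcomp Require Import complex.
From mathcomp Require Import ring lra.
Set Implicit Arguments. Unset Strict Implicit. Unset Printing Implicit Defensive.
Import Order.TTheory GRing.Theory Num.Theory.
Local Open Scope ring_scope.

(* Let phi be the lsc convex envelope of f + ||.||^2, so that Q_2(f) = phi - ||.||^2, and let
   z' = (I - A^*A)x' + A^*b.  Then G := Q_2(f) + ||. - z'||^2 is phi plus an affine function,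
   hence convex, and K_reg = G + q for a real quadratic q.  Since x' - z' = A^*(Ax' - b),
   q(y) - q(x') = ||A(y - x')||^2 - ||y - x'||^2, so K_reg and G have the same first-order
   behaviour at x'.  A minimiser of G is therefore stationary for K_reg, and conversely
   stationarity of K_reg at x' forces every one-sided slope of the convex G at x' to be
   nonnegative, which makes x' a global minimiser.  For the scalars only the laws that make
   Re<.,.> a real inner product with adjoint A^* are used. *)

Record scalar_laws (R : realType) (S : scalars R) : Prop := ScalarLaws {
  sc_reD : {morph @sc_re R S : u v / u + v};
  sc_reZ : forall t (u : S), sc_re (sc_emb S t * u) = t * sc_re u;
  sc_cjD : {morph @sc_cj R S : u v / u + v};
  sc_cjM : {morph @sc_cj R S : u v / u * v};
  sc_cjK : involutive (@sc_cj R S);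
  sc_re_mulcjC : forall u v : S, sc_re (u * sc_cj v) = sc_re (v * sc_cj u);
  sc_re_mulcj_ge0 : forall u : S, 0 <= sc_re (u * sc_cj u);
  sc_re_mulcj_eq0 : forall u : S, sc_re (u * sc_cj u) = 0 -> u = 0;
  sc_emb1B : forall t, sc_emb S (1 - t) = 1 - sc_emb S t }.

Lemma realS_laws (R : realType) : scalar_laws (realS R).
Proof.
split => //=.
- by move=> u v; rewrite mulrC.
- by move=> u; rewrite -expr2 sqr_ge0.
- by move=> u /eqP; rewrite mulf_eq0 orbb => /eqP.
Qed.

Lemma complexS_laws (R : realType) : scalar_laws (complexS R).
Proof.
split => /=.
- by move=> [a b] [c d].
- by move=> t [a b] /=; rewrite mul0r subr0.
- by move=> [a b] [c d] /=; rewrite /conjc /= opprD.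
- by move=> [a b] [c d]; rewrite /conjc /=; congr Complex; ring.
- by move=> [a b]; rewrite /conjc opprK.
- by move=> [a b] [c d] /=; ring.
- by move=> [a b] /=; nra.
- by move=> [a b] /= h; congr Complex; nra.
- by move=> t; apply/eqP; rewrite eq_complex /= oppr0 addr0 !eqxx.
Qed.

Section RealInnerProduct.
Variables (R : realType) (S : scalars R).
Hypothesis HS : scalar_laws S.
Local Notation emb := (@sc_emb R S).
Local Notation re := (@sc_re R S).
Local Notation cj := (@sc_cj R S).

Definition rdot n (x y : 'cV[S]_n) : R := re (inner x y).

Lemma sc_re0 : re 0 = 0.
Proof. by apply: (addrI (re 0)); rewrite -(sc_reD HS) !addr0. Qed.

Lemma sc_cj0 : cj 0 = 0.
Proof. by apply: (addrI (cj 0)); rewrite -(sc_cjD HS) !addr0. Qed.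

Lemma sc_re_sum n (u : 'I_n -> S) : re (\sum_i u i) = \sum_i re (u i).
Proof. exact: (big_morph _ (sc_reD HS) sc_re0). Qed.

Lemma sc_cj_sum n (u : 'I_n -> S) : cj (\sum_i u i) = \sum_i cj (u i).
Proof. exact: (big_morph _ (sc_cjD HS) sc_cj0). Qed.

Lemma rdotC n (x y : 'cV[S]_n) : rdot x y = rdot y x.
Proof. by rewrite /rdot /inner !sc_re_sum; apply: eq_bigr => i _; apply: sc_re_mulcjC. Qed.

Lemma rdotDl n (x y z : 'cV[S]_n) : rdot (x + y) z = rdot x z + rdot y z.
Proof.
rewrite /rdot /inner -(sc_reD HS) -big_split /=.
by congr re; apply: eq_bigr => i _; rewrite !mxE mulrDl.
Qed.

Lemma rdotDr n (x y z : 'cV[S]_n) : rdot x (y + z) = rdot x y + rdot x z.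
Proof. by rewrite !(rdotC x) rdotDl. Qed.

Lemma rdotZl n t (x y : 'cV[S]_n) : rdot (emb t *: x) y = t * rdot x y.
Proof.
rewrite /rdot /inner !sc_re_sum mulr_sumr; apply: eq_bigr => i _.
by rewrite !mxE -mulrA (sc_reZ HS).
Qed.

Lemma rdotZr n t (x y : 'cV[S]_n) : rdot x (emb t *: y) = t * rdot x y.
Proof. by rewrite !(rdotC x) rdotZl. Qed.

Lemma rdot0l n (y : 'cV[S]_n) : rdot 0 y = 0.
Proof. by apply: (addrI (rdot 0 y)); rewrite -rdotDl !addr0. Qed.

Lemma rdotNl n (x y : 'cV[S]_n) : rdot (- x) y = - rdot x y.
Proof. by apply: (addrI (rdot x y)); rewrite -rdotDl !addrN rdot0l. Qed.

Lemma rdotNr n (x y : 'cV[S]_n) : rdot x (- y) = - rdot x y.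
Proof. by rewrite !(rdotC x) rdotNl. Qed.

Lemma rdot_adjmx m n (A : 'M[S]_(m, n)) x w : rdot (A *m x) w = rdot x (adjmx A *m w).
Proof.
rewrite /rdot /inner; congr re.
under eq_bigr => i _ do rewrite !mxE mulr_suml.
rewrite exchange_big /=; apply: eq_bigr => j _.
rewrite !mxE sc_cj_sum mulr_sumr; apply: eq_bigr => i _.
by rewrite !mxE (sc_cjM HS) (sc_cjK HS) mulrCA mulrA.
Qed.

Lemma nrm2_rdot n (x : 'cV[S]_n) : nrm2 x = rdot x x.
Proof. by []. Qed.

Lemma nrm2_ge0 n (x : 'cV[S]_n) : 0 <= nrm2 x.
Proof.
by rewrite /nrm2 /inner sc_re_sum; apply: sumr_ge0 => i _; apply: sc_re_mulcj_ge0.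
Qed.

Lemma nrm2_eq0 n (x : 'cV[S]_n) : nrm2 x = 0 -> x = 0.
Proof.
rewrite /nrm2 /inner sc_re_sum => /eqP.
rewrite psumr_eq0 => [/allP x0|i _]; last exact: sc_re_mulcj_ge0.
apply/matrixP => i j; rewrite (ord1 j) mxE; apply: (sc_re_mulcj_eq0 HS).
by apply/eqP/x0; rewrite mem_index_enum.
Qed.

Lemma nrm2D n (x y : 'cV[S]_n) : nrm2 (x + y) = nrm2 x + nrm2 y + 2 * rdot x y.
Proof. by rewrite !nrm2_rdot !rdotDl !rdotDr (rdotC y x); ring. Qed.

Lemma nrm2B n (x y : 'cV[S]_n) : nrm2 (x - y) = nrm2 x + nrm2 y - 2 * rdot x y.
Proof. by rewrite !nrm2_rdot !rdotDl !rdotDr !rdotNl !rdotNr (rdotC y x); ring. Qed.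

Lemma nrm2Z n t (x : 'cV[S]_n) : nrm2 (emb t *: x) = t ^+ 2 * nrm2 x.
Proof. by rewrite !nrm2_rdot rdotZl rdotZr mulrA expr2. Qed.

Lemma nrmZ n t (x : 'cV[S]_n) : 0 <= t -> nrm (emb t *: x) = t * nrm x.
Proof. by move=> t0; rewrite /nrm nrm2Z sqrtrM ?sqr_ge0 // sqrtr_sqr ger0_norm. Qed.

Lemma nrm_gt0 n (x : 'cV[S]_n) : x != 0 -> 0 < nrm x.
Proof.
move=> x0; rewrite sqrtr_gt0 lt_neqAle nrm2_ge0 andbT eq_sym.
by apply: contra x0 => /eqP/nrm2_eq0 ->.
Qed.

Lemma sqr_nrm n (x : 'cV[S]_n) : nrm x ^+ 2 = nrm2 x.
Proof. exact/sqr_sqrtr/nrm2_ge0. Qed.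

Lemma emb_comb_subr n t (y x : 'cV[S]_n) :
  emb t *: y + emb (1 - t) *: x - x = emb t *: (y - x).
Proof. by rewrite (sc_emb1B HS) scalerBl scale1r scalerBr addrCA addrAC subrr add0r. Qed.

End RealInnerProduct.

Lemma first_order_ge0 (R : realFieldType) (D C : R) :
  (forall e, 0 < e -> exists2 delta, 0 < delta &
     forall t, 0 < t <= delta -> - (e * t) <= t * D + t ^+ 2 * C) ->
  0 <= D.
Proof.
move=> small_t; rewrite leNgt; apply/negP => D_lt0.
have [delta delta_gt0 ineq] := small_t (- D / 2) ltac:(lra).
have C1_gt0 : 0 < `|C| + 1 by rewrite ltr_wpDl.
pose t := Num.min delta (- D / (4 * (`|C| + 1))).
have t_gt0 : 0 < t by rewrite lt_min delta_gt0 divr_gt0 ?mulr_gt0 //; lra.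
have tC_small : t * (4 * (`|C| + 1)) <= - D.
  by rewrite -ler_pdivlMr ?mulr_gt0 // ge_min lexx orbT.
have := ineq t; rewrite t_gt0 ge_min lexx /= => /(_ isT).
have C_le := ler_norm C.
nra.
Qed.

Section Envelope.
Variables (R : realType) (S : scalars R) (n : nat).
Local Notation V := 'cV[S]_n.

Lemma lsc_cvx_env_ge0 (h : V -> \bar R) :
  (forall y, 0 <= h y)%E -> forall x, (0 <= lsc_cvx_env h x)%E.
Proof.
move=> h_ge0 x; apply: ereal_sup_ubound; exists (fun=> 0%E) => //; split; [|split].
- by move=> y a a_lt0; exists 1 => // z _.
- move=> y z t /andP[t_ge0 t_le1] a b; rewrite !lee_fin => a_ge0 b_ge0.
  by rewrite addr_ge0 ?mulr_ge0 ?subr_ge0.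
- exact: h_ge0.
Qed.

Lemma convexf_lsc_cvx_env (h : V -> \bar R) : convexf (lsc_cvx_env h).
Proof.
move=> x y t t01 a b hx hy; apply: ge_ereal_sup => _ [g g_env <-].
by apply: g_env.2.1 => //; [apply: le_trans _ hx | apply: le_trans _ hy];
  apply: ereal_sup_ubound; exists g.
Qed.

Lemma convexf_addr (g : V -> \bar R) (l : V -> R) :
  convexf g ->
  (forall x y t, l (sc_emb S t *: x + sc_emb S (1 - t) *: y) = t * l x + (1 - t) * l y) ->
  convexf (fun x => g x + (l x)%:E)%E.
Proof.
move=> g_cvx l_affine x y t t01 a b gx gy.
rewrite -lee_suber_addr // -EFinB in gx.
rewrite -lee_suber_addr // -EFinB in gy.
rewrite l_affine -lee_suber_addr // -EFinB.
have -> : t * a + (1 - t) * b - (t * l x + (1 - t) * l y) =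
          t * (a - l x) + (1 - t) * (b - l y) by ring.
exact: g_cvx.
Qed.

End Envelope.

Section Stationarity.
Variables (R : realType) (S : scalars R) (n : nat).
Hypothesis HS : scalar_laws S.
Local Notation V := 'cV[S]_n.
Local Notation emb := (@sc_emb R S).

Lemma stationaryP (g : V -> \bar R) x :
  stationary g x <->
  g x \is a fin_num /\
  forall e, 0 < e -> exists2 d, 0 < d &
    forall y, 0 < nrm (y - x) < d -> ((- (e * nrm (y - x)))%:E <= g y - g x)%E.
Proof.
have re_inner0 (y : V) : sc_re (inner 0 y) = 0 := rdot0l HS y.
by split=> -[gx g_loc]; split=> // e /g_loc[d d_gt0 near_x]; exists d => // y /near_x;
  rewrite re_inner0 sube0.
Qed.

Lemma argmin_stationary_addr (G : V -> \bar R) (q : V -> R) x :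
  (forall y, G y != -oo)%E ->
  (forall y, - nrm2 (y - x) <= q y - q x) ->
  is_argmin G x -> stationary (fun y => G y + (q y)%:E)%E x.
Proof.
move=> G_ninfty q_lb [Gx_pinfty G_min].
have [p Gx] : exists p, G x = p%:E.
  by move: Gx_pinfty (G_ninfty x); case: (G x) => // p; exists p.
apply/stationaryP; split=> [|e e_gt0]; first by rewrite Gx.
exists e => // y /andP[_ y_near].
have := G_min y; rewrite Gx.
case: (G y) (G_ninfty y) => [r _|_ _|//]; last by rewrite /= leey.
rewrite /= !lee_fin => p_le_r.
have := q_lb y; have : nrm2 (y - x) <= e * nrm (y - x).
  by rewrite -sqr_nrm // expr2 ler_wpM2r // ?sqrtr_ge0 // ltW.
lra.
Qed.

Lemma stationary_addr_argmin (G : V -> \bar R) (q : V -> R) x :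
  convexf G -> (forall y, G y != -oo)%E ->
  (forall y, exists C, forall t, 0 < t <= 1 ->
     q (emb t *: y + emb (1 - t) *: x) - q x <= t ^+ 2 * C) ->
  stationary (fun y => G y + (q y)%:E)%E x -> is_argmin G x.
Proof.
move=> G_cvx G_ninfty q_growth /stationaryP[Kx_fin K_loc].
have [p Gx] : exists p, G x = p%:E.
  by move: Kx_fin (G_ninfty x); case: (G x) => // p; exists p.
split=> [|y]; first by rewrite Gx.
move: (G_ninfty y); case Gy: (G y) => [r||] // _; last by rewrite leey.
rewrite Gx lee_fin -subr_ge0.
have [y_eq_x | y_neq_x] := eqVneq y x.
  by move: Gy; rewrite y_eq_x Gx => -[->]; rewrite subrr.
have N_gt0 : 0 < nrm (y - x) by apply: nrm_gt0; rewrite // subr_eq0.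
set N := nrm (y - x) in N_gt0.
have [C q_le] := q_growth y.
apply: (first_order_ge0 (C := C)) => e e_gt0.
have [d d_gt0 K_near] := K_loc (e / N) (divr_gt0 e_gt0 N_gt0).
exists (Num.min 1 (d / (2 * N))) => [|t /andP[t_gt0]].
  by rewrite lt_min ltr01 divr_gt0 ?mulr_gt0.
rewrite le_min => /andP[t_le1 t_le_d].
set yt := emb t *: y + emb (1 - t) *: x.
have yt_dist : nrm (yt - x) = t * N by rewrite emb_comb_subr // nrmZ // ltW.
have yt_near : 0 < nrm (yt - x) < d.
  rewrite yt_dist mulr_gt0 //=; rewrite ler_pdivlMr ?mulr_gt0 // in t_le_d; nra.
have t01 : 0 <= t <= 1 by rewrite ltW.
have Gyt_le : (G yt <= (t * r + (1 - t) * p)%:E)%E by apply: G_cvx; rewrite ?Gy ?Gx.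
have [g Gyt] : exists g, G yt = g%:E.
  by move: Gyt_le (G_ninfty yt); case: (G yt) => // g; exists g.
have := K_near yt yt_near; rewrite Gyt Gx yt_dist /= lee_fin.
have -> : e / N * (t * N) = e * t by field; rewrite gt_eqF.
rewrite Gyt lee_fin in Gyt_le.
have := q_le t (ltac:(by rewrite t_gt0)).
lra.
Qed.

End Stationarity.

Lemma subr_zprime (R : realType) (S : scalars R) m n (A : 'M[S]_(m, n)) b x :
  x - zprime A b x = adjmx A *m (A *m x - b).
Proof.
rewrite /zprime mulmxBl mul1mx mulmxBr mulmxA.
by rewrite opprD opprB addrA (addrC x) subrK.
Qed.

Section QuadraticEnvelope.
Variables (R : realType) (S : scalars R).
Hypothesis HS : scalar_laws S.

Lemma zprime_residual_gap m n (A : 'M[S]_(m, n)) b x y :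
  nrm2 (A *m y - b) - nrm2 (y - zprime A b x)
    - (nrm2 (A *m x - b) - nrm2 (x - zprime A b x)) =
  nrm2 (A *m (y - x)) - nrm2 (y - x).
Proof.
have w_adj : x - zprime A b x = adjmx A *m (A *m x - b) := subr_zprime A b x.
have -> : A *m y - b = (A *m x - b) + A *m (y - x).
  by rewrite mulmxBr [RHS]addrC [RHS]addrA subrK.
have -> : y - zprime A b x = (x - zprime A b x) + (y - x).
  by rewrite [RHS]addrC [RHS]addrA subrK.
move: (A *m x - b) (x - zprime A b x) (y - x) w_adj => u w d ->.
rewrite !(nrm2D HS) (rdotC HS u) (rdot_adjmx HS) (rdotC HS d); ring.
Qed.

Lemma prop3p2_claim_laws m n (A : 'M[S]_(m, n)) b (f : 'cV[S]_n -> \bar R) :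
  (forall x, 0 <= f x)%E -> forall x', prop3p2_claim A b f x'.
Proof.
move=> f_ge0 x'; rewrite /prop3p2_claim.
set h := fun y => (f y + (nrm2 y)%:E)%E.
set z := zprime A b x'.
set G := fun y => (Q2 f y + (nrm2 (y - z))%:E)%E.
set q := fun y => nrm2 (A *m y - b) - nrm2 (y - z).
have env_ge0 : forall y, (0 <= lsc_cvx_env h y)%E.
  by apply: lsc_cvx_env_ge0 => y; rewrite adde_ge0 // lee_fin (nrm2_ge0 HS).
have G_env : G = fun y => (lsc_cvx_env h y + (nrm2 (y - z) - nrm2 y)%:E)%E.
  by apply/boolp.funext => y; rewrite /G /Q2 -/h EFinB addeAC addeA.
have G_ninfty y : G y != -oo%E.
  by rewrite G_env; move: (env_ge0 y); case: (lsc_cvx_env h y).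
have G_cvx : convexf G.
  rewrite G_env; apply: (convexf_addr (l := fun y => nrm2 (y - z) - nrm2 y)).
    exact: convexf_lsc_cvx_env.
  move=> u v t.
  by rewrite !(nrm2B HS) (rdotDl HS) !(rdotZl HS); ring.
have -> : Kreg A b f = fun y => (G y + (q y)%:E)%E.
  by apply/boolp.funext => y; rewrite /Kreg /G /q -[RHS]addeA -EFinD subrKC.
split.
- apply: (stationary_addr_argmin HS) => // y.
  exists (nrm2 (A *m (y - x'))) => t _.
  rewrite /q zprime_residual_gap emb_comb_subr // -scalemxAr !(nrm2Z HS).
  by have := mulr_ge0 (sqr_ge0 t) (nrm2_ge0 HS (y - x')); lra.
- apply: (argmin_stationary_addr HS) => // y.
  by rewrite /q zprime_residual_gap; have := nrm2_ge0 HS (A *m (y - x')); lra.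
Qed.

End QuadraticEnvelope.

Theorem proposition3p2 (R : realType) :
  (forall (m n : nat) (A : 'M[realS R]_(m, n)) (b : 'cV[realS R]_m)
     (f : 'cV[realS R]_n -> \bar R),
     (forall x, (0 <= f x)%E) ->
     forall x' : 'cV[realS R]_n, prop3p2_claim A b f x') /\
  (forall (m n : nat) (A : 'M[complexS R]_(m, n)) (b : 'cV[complexS R]_m)
     (f : 'cV[complexS R]_n -> \bar R),
     (forall x, (0 <= f x)%E) ->
     forall x' : 'cV[complexS R]_n, prop3p2_claim A b f x').
Proof.
split=> m n A b f f_ge0 x'.
- exact: (prop3p2_claim_laws (realS_laws R) A b f_ge0 x').
- exact: (prop3p2_claim_laws (complexS_laws R) A b f_ge0 x').
Qed.
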